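(* Let $d\ge1$ and let $a(t)=\sum_{n\ge0}a_nt^n=\frac{h_0(a)+\cdots+h_\lambda(a)t^\lambda}{(1-t)^d}$ be a rational formal power series with integer coefficients, $h_\lambda(a)\ne0$. If $h_i(a)\ge0$ for $0\le i\le\lambda$, then for every $0\le i\le\lfloor d/2\rfloor$, $g_i(a)\le g_i(a^{\langle d\rangle})\le g_i(a^{\langle d+1\rangle})\le g_i(a^{\langle d+2\rangle})\le\cdots$.
   Context: One sets $h_i(a)=0$ for $i>\lambda$. For an integer $r\ge1$, the $r$-th Veronese series is $a^{\langle r\rangle}(t)=\sum_{n\ge0}a_{nr}t^n$; it can again be written as $\frac{h_0(a^{\langle r\rangle})+\cdots+h_{\lambda'}(a^{\langle r\rangle})t^{\lambda'}}{(1-t)^d}$ with the same $d$ and polynomial numerator, with $h_i(a^{\langle r\rangle})=0$ beyond its degree. For any such series $b(t)$ the $g$-vector entries are $g_0(b)=h_0(b)$ and $g_i(b)=h_i(b)-h_{i-1}(b)$ for $i\ge1$. *)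

From HB Require Import structures.
From mathcomp Require Import all_boot all_order all_algebra.
Set Implicit Arguments. Unset Strict Implicit. Unset Printing Implicit Defensive.
Import Order.TTheory GRing.Theory Num.Theory.
Local Open Scope ring_scope.

(* A formal power series b(t) = sum_n b n t^n with integer coefficients is
   represented by its coefficient sequence b : nat -> int.
   hvec d b i is the coefficient of t^i in (1-t)^d * b(t); when
   b(t) = (h_0 + ... + h_l t^l)/(1-t)^d, this is exactly h_i(b)
   (and it is 0 for i > l). *)
Definition hvec (d : nat) (b : nat -> int) (i : nat) : int :=
  \sum_(j < d.+1 | (j <= i)%N) (-1) ^+ j * ('C(d, j))%:Z * b (i - j)%N.

Definition gvec (d : nat) (b : nat -> int) (i : nat) : int :=
  if i is i'.+1 then hvec d b i - hvec d b i' else hvec d b 0%N.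

Definition veronese (r : nat) (b : nat -> int) : nat -> int :=
  fun n => b (n * r)%N.

From HB Require Import structures.
From mathcomp Require Import all_boot all_order all_algebra.
From mathcomp Require Import zify ring lra.
Set Implicit Arguments. Unset Strict Implicit. Unset Printing Implicit Defensive.
Import Order.TTheory GRing.Theory Num.Theory.
Local Open Scope ring_scope.

(* Write h_k for h_k(a).  Since (1 - t)^d a(t) = h_0 + ... + h_lam t^lam,
   a_n = sum_k h_k P_d(n - k), where P_d(m) is the coefficient of t^m in
   (1 - t)^(-d).  As (1 - t^r)^d (1 - t)^(-d) = (1 + t + ... + t^(r-1))^d, the
   h-vector of the r-th Veronese series is h_i(a^<r>) = sum_k h_k E_d^r(ir - k),
   where E_n^r(m) is the coefficient of t^m in (1 + t + ... + t^(r-1))^n, and so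
       g_(i+1)(a^<r>) = sum_k h_k (E_d^r((i+1)r - k) - E_d^r(ir - k)).
   Since every h_k >= 0 (and g_0 = h_0 = a_0 for every Veronese series), the
   theorem reduces, for 2(i+1) <= d, to comparing these differences for fixed k:
   from r = 1 (where a^<1> = a and E_d^1(m) = [m = 0]) to r = d, and from r to
   r + 1 when r >= d. *)

(* rnom n r m is the coefficient of t^m in (1 + t + ... + t^(r-1))^n. *)
Fixpoint rnom (n r : nat) (m : int) {struct n} : int :=
  if n is n'.+1 then \sum_(c < r) rnom n' r (m - c%:Z)
  else if m == 0 then 1 else 0.

Definition rdeg (n r : nat) : int := (n * r.-1)%N%:Z.

Lemma rdeg0 r : rdeg 0 r = 0. Proof. by rewrite /rdeg mul0n. Qed.

Lemma rdegS n r : rdeg n.+1 r = rdeg n r + (r.-1)%:Z.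
Proof. by rewrite /rdeg mulSn PoszD addrC. Qed.

Lemma rdeg_succr n r : (0 < r)%N -> rdeg n r.+1 = rdeg n r + n%:Z.
Proof. by case: r => // r _; rewrite /rdeg /= mulnS PoszD addrC. Qed.

Lemma rnom_neg n r m : m < 0 -> rnom n r m = 0.
Proof.
elim: n m => [|n IH] m hm /=.
  by case: eqP => // h; move: hm; rewrite h ltxx.
rewrite big1 // => c _; apply: IH; lia.
Qed.

Lemma rnom_sym n r m : rnom n r m = rnom n r (rdeg n r - m).
Proof.
elim: n m => [|n IH] m /=.
  rewrite rdeg0 sub0r; case: eqP => [->|h]; first by rewrite eqxx.
  by case: eqP => // h'; case: h; rewrite -[m]opprK h' oppr0.
rewrite (reindex_inj rev_ord_inj) /=.
apply: eq_bigr => c _; rewrite IH rdegS; congr rnom.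
have := ltn_ord c; lia.
Qed.

Lemma rnom0 n r : (0 < r)%N -> rnom n r 0 = 1.
Proof.
case: r => // r _; elim: n => [|n IH] //=.
rewrite big_ord_recl /= subr0 IH big1 ?addr0 // => c _.
apply: rnom_neg; rewrite /bump /=; lia.
Qed.

(* (1 - t) (1 + ... + t^(r-1))^(n+1) = (1 - t^r) (1 + ... + t^(r-1))^n:
   first differences at level n+1 are r-windows at level n. *)
Lemma rnom_diff n r x :
  rnom n.+1 r x - rnom n.+1 r (x - 1) = rnom n r x - rnom n r (x - r%:Z).
Proof.
rewrite /= -sumrB.
have -> : \sum_(c < r) (rnom n r (x - c%:Z) - rnom n r (x - 1 - c%:Z)) =
   - \sum_(0 <= c < r) (rnom n r (x - (c.+1)%:Z) - rnom n r (x - c%:Z)).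
  rewrite big_mkord -sumrN; apply: eq_bigr => c _.
  by rewrite opprB -addrA -opprD -PoszD add1n.
by rewrite telescope_sumr // subr0 opprB.
Qed.

Lemma unimodal_of_step (f : int -> int) (C : int) :
  (forall x, 2 * x <= C + 1 -> f (x - 1) <= f x) ->
  forall x y, 2 * x <= C -> y <= x -> f y <= f x.
Proof.
move=> hstep x y hx hy.
have [k ->] : exists k : nat, y = x - k%:Z.
  by exists `|x - y|%N; rewrite abszE ger0_norm ?subr_ge0 //; lia.
elim: k => [|k IH]; first by rewrite subr0.
apply: le_trans IH.
have -> : x - k.+1%:Z = (x - k%:Z) - 1 by lia.
apply: hstep; lia.
Qed.

Lemma unimodal_sym (f : int -> int) (C : int) :
  (forall x, f x = f (C - x)) ->
  (forall x y, 2 * x <= C -> y <= x -> f y <= f x) ->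
  forall x y, y <= x -> y <= C - x -> f y <= f x.
Proof.
move=> hsym hmono x y h1 h2.
case: (lerP (2 * x) C) => hx; first exact: hmono.
rewrite [f x]hsym; apply: hmono => //; lia.
Qed.

Lemma rnom_step n r : (0 < r)%N ->
  forall x, 2 * x <= rdeg n r + 1 -> rnom n r (x - 1) <= rnom n r x.
Proof.
move=> r0; elim: n => [|n IH] x hx.
  rewrite rdeg0 in hx; rewrite /=.
  case: eqP => h1; case: eqP => h2 //; lia.
rewrite -subr_ge0 rnom_diff subr_ge0.
apply: (unimodal_sym (@rnom_sym n r) (unimodal_of_step IH)); first lia.
rewrite rdegS in hx; lia.
Qed.

Lemma rnom_mono n r x y : (0 < r)%N ->
  y <= x -> y <= rdeg n r - x -> rnom n r y <= rnom n r x.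
Proof.
by move=> r0; apply: (unimodal_sym (@rnom_sym n r) (unimodal_of_step (@rnom_step n r r0))).
Qed.

Lemma rnom_pos n r x : (0 < r)%N -> 0 <= x -> x <= rdeg n r -> 1 <= rnom n r x.
Proof. by move=> r0 h1 h2; rewrite -(rnom0 n r0); apply: rnom_mono => //; lia. Qed.

(* For 0 <= x < r the difference at level n+2 is the coefficient
   rnom n.+1 r x itself, which lies in the support. *)
Lemma rnom_diff_pos_low n r x : (0 < r)%N -> 0 <= x -> x < r%:Z ->
  1 <= rnom n.+2 r x - rnom n.+2 r (x - 1).
Proof.
move=> r0 h1 h2; rewrite rnom_diff (@rnom_neg _ _ (x - r%:Z)); last lia.
rewrite subr0; apply: rnom_pos => //.
have rdeg_ge0 : 0 <= rdeg n r by [].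
rewrite rdegS; lia.
Qed.

(* For
   x >= r the difference at level n+3 is the window rnom n.+2 r x -
   rnom n.+2 r (x - r), which dominates the (positive, by induction) step
   of level n+2 at x - r + 1, by unimodality. *)
Lemma rnom_diff_pos n r x : (0 < r)%N -> 0 <= x -> 2 * x <= rdeg n.+2 r ->
  1 <= rnom n.+2 r x - rnom n.+2 r (x - 1).
Proof.
move=> r0; elim: n x => [|n IH] x h1 h2.
  apply: rnom_diff_pos_low => //; move: h2; rewrite !rdegS rdeg0; lia.
case: (ltrP x r%:Z) => hxr; first exact: rnom_diff_pos_low.
have step_pos := IH (x - r%:Z + 1).
rewrite (_ : x - r%:Z + 1 - 1 = x - r%:Z) in step_pos; last lia.
have mono : rnom n.+2 r (x - r%:Z + 1) <= rnom n.+2 r x.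
  apply: rnom_mono => //; move: h2; rewrite !rdegS; lia.
rewrite rnom_diff; apply: le_trans (step_pos _ _) _.
- lia.
- move: h2; rewrite !rdegS; lia.
- by rewrite lerD2r.
Qed.

Lemma rnom1 n m : rnom n 1 m = if m == 0 then 1 else 0.
Proof. by elim: n m => [|n IH] m //=; rewrite big_ord1 subr0 IH. Qed.

Lemma telescope_le (f g : int -> int) (z w : int) (L : nat) :
  (forall t : nat, (t < L)%N ->
     f (z + t.+1%:Z) - f (z + t.+1%:Z - 1) <= g (w + t.+1%:Z) - g (w + t.+1%:Z - 1)) ->
  f (z + L%:Z) - f z <= g (w + L%:Z) - g w.
Proof.
elim: L => [|L IH] hstep; first by rewrite !addr0 !subrr.
have ez : z + L%:Z = z + L.+1%:Z - 1 by lia.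
have ew : w + L%:Z = w + L.+1%:Z - 1 by lia.
have := IH (fun t ht => hstep t (ltnW ht)); have := hstep L (ltnSn L).
rewrite -ez -ew; lra.
Qed.

Definition window_cmp (p r : nat) : Prop :=
  forall (s : nat) (m : int), (2 * s <= p)%N -> 2 * (m + s%:Z) <= rdeg p.+1 r.+1 ->
    rnom p r m - rnom p r (m - r%:Z) <=
    rnom p r.+1 (m + s%:Z) - rnom p r.+1 (m + s%:Z - r.+1%:Z).

Lemma window_cmp0 r : window_cmp 0 r.
Proof.
move=> s m hs hm; have s0 : s = 0%N by lia.
subst s; rewrite /rdeg /= mul1n in hm; rewrite /=.
case: eqP => h1; case: eqP => h2; case: eqP => h3; case: eqP => h4; lia.
Qed.

(* By rnom_diff the r-window f m - f (m - r) of
   f = rnom p.+1 r telescopes into steps of f, each of which is a window at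
   level p; the induction hypothesis bounds them by the shifted steps of
   g = rnom p.+1 r.+1, which telescope back to a window of g.  This handles
   windows ending left of the centre of f; the others are reflected by
   symmetry or are nonpositive. *)
Lemma window_cmpS p r : (0 < r)%N -> window_cmp p r -> window_cmp p.+1 r.
Proof.
move=> r0 IH s m hs hm.
(* a shift s' in {s - 1, s} admissible at level p *)
pose s' := if (2 * s <= p)%N then s else s.-1.
have hs' : [/\ (2 * s' <= p)%N, (s' <= s)%N, (s <= s'.+1)%N & (s + s' <= p.+1)%N].
  by rewrite /s'; case: ifP => h; split; lia.
case: hs' => hs'1 hs'2 hs'3 hs'4.
set f := rnom p.+1 r; set g := rnom p.+1 r.+1; set C := rdeg p.+1 r.
have eCg : rdeg p.+1 r.+1 = C + p.+1%:Z by rewrite rdeg_succr.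
rewrite rdegS eCg /= in hm.
have g_win_ge0 : 0 <= g (m + s%:Z) - g (m + s%:Z - r.+1%:Z).
  by rewrite subr_ge0; apply: rnom_mono => //; rewrite ?eCg; lia.
have f_le_g : forall b : int, m - r%:Z <= b -> b <= m -> 2 * b <= C -> b <= C - m ->
    f b - f (m - r%:Z) <= g (m + s%:Z) - g (m + s%:Z - r.+1%:Z).
  move=> b hb1 hb2 hb3 hb4.
  have [L eL] : exists L : nat, b = m - r%:Z + L%:Z.
    by exists (absz (b - (m - r%:Z))%R); rewrite abszE ger0_norm ?subr_ge0 //; lia.
  have tele : f b - f (m - r%:Z) <= g (m - r%:Z + s'%:Z + L%:Z) - g (m - r%:Z + s'%:Z).
    rewrite eL; apply: telescope_le => t ht.
    rewrite /f /g !rnom_diff.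
    have -> : m - r%:Z + s'%:Z + t.+1%:Z = (m - r%:Z + t.+1%:Z) + s'%:Z by ring.
    by apply: IH => //; rewrite eCg; lia.
  apply: le_trans tele _; apply: lerB.
    by apply: rnom_mono => //; rewrite ?eCg; lia.
  by apply: rnom_mono => //; rewrite ?eCg; lia.
case: (lerP (2 * m) C) => hmC; first by apply: f_le_g => //; lia.
rewrite [f m]rnom_sym -/C.
case: (lerP (m - r%:Z) (C - m)) => h2; first by apply: f_le_g => //; lia.
apply: le_trans g_win_ge0; rewrite subr_le0; apply: rnom_mono => //; lia.
Qed.

Lemma window_cmp_all p r : (0 < r)%N -> window_cmp p r.
Proof.
by move=> r0; elim: p => [|p IH]; [exact: window_cmp0 | exact: window_cmpS].
Qed.

(* negbin_nat d n is the coefficient of t^n in (1 - t)^(-d), i.e. 'C(n+d-1, d-1),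
   computed as iterated partial sums. *)
Fixpoint negbin_nat (d n : nat) {struct d} : int :=
  if d is d'.+1 then \sum_(l < n.+1) negbin_nat d' l else if n == 0%N then 1 else 0.

Definition negbin (d : nat) (m : int) : int :=
  match m with Posz n => negbin_nat d n | Negz _ => 0 end.

Lemma negbin_neg d m : m < 0 -> negbin d m = 0.
Proof. by case: m. Qed.

(* (1 - t) (1 - t)^(-d-1) = (1 - t)^(-d). *)
Lemma negbin_diff d x : negbin d.+1 x - negbin d.+1 (x - 1) = negbin d x.
Proof.
case: x => [[|n]|n].
- by rewrite /= big_ord1 subr0.
- have -> : (Posz n.+1 - 1) = Posz n by rewrite -addn1 PoszD addrK.
  by rewrite /= big_ord_recr /= addrAC subrr add0r.
- by rewrite negbin_neg ?subrr ?negbin_neg.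
Qed.

(* (1 + ... + t^(r-1)) (1 - t)^(-d) = (1 - t^r) (1 - t)^(-d-1). *)
Lemma negbin_window d r x :
  \sum_(c < r) negbin d (x - c%:Z) = negbin d.+1 x - negbin d.+1 (x - r%:Z).
Proof.
elim: r => [|r IH]; first by rewrite big_ord0 subr0 subrr.
rewrite big_ord_recr /= IH -(negbin_diff d (x - r%:Z)).
have -> : x - r%:Z - 1 = x - r.+1%:Z by lia.
ring.
Qed.

(* (1 - t^r)^d (1 - t)^(-d) = (1 + t + ... + t^(r-1))^d, coefficientwise. *)
Lemma negbin_rnom d r m :
  \sum_(j < d.+1) (-1) ^+ j * ('C(d, j))%:Z * negbin d (m - (j * r)%N%:Z) = rnom d r m.
Proof.
elim: d m => [|d IH] m.
  rewrite big_ord1 /= mul0n subr0 mul1r.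
  by case: m => [n|n] //=; case: n.
rewrite /=.
set F := fun j : nat => negbin d.+1 (m - (j * r)%N%:Z).
have window : forall j : nat,
    \sum_(c < r) negbin d (m - (j * r)%N%:Z - c%:Z) = F j - F j.+1.
  move=> j; rewrite negbin_window /F; congr (_ - negbin _ _).
  rewrite mulSn PoszD; ring.
(* Pascal's rule turns the alternating sum at level d+1 into one of
   differences F j - F j.+1 at level d *)
have pascal : \sum_(j < d.+2) (-1) ^+ j * ('C(d.+1, j))%:Z * F j =
    \sum_(j < d.+1) (-1) ^+ j * ('C(d, j))%:Z * (F j - F j.+1).
  have binS_split : forall j : 'I_d.+2, (-1) ^+ j * ('C(d.+1, j))%:Z * F j =
     (-1) ^+ j * ('C(d, j))%:Z * F j +
     (if (j : nat) is j'.+1 then - ((-1) ^+ j' * ('C(d, j'))%:Z * F j) else 0).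
    case=> [[|j] hj] /=; first by rewrite !bin0 addr0.
    by rewrite binS PoszD exprS; ring.
  rewrite (eq_bigr _ (fun j _ => binS_split j)) big_split /=.
  rewrite [X in X + _]big_ord_recr /= bin_small // mulr0 mul0r addr0.
  rewrite [X in _ + X]big_ord_recl /= add0r.
  rewrite -big_split; apply: eq_bigr => j _ /=.
  rewrite /bump /= add1n; ring.
rewrite pascal.
under [RHS]eq_bigr => c _ do rewrite -IH.
rewrite exchange_big /=; apply: eq_bigr => j _.
rewrite -window mulr_sumr; apply: eq_bigr => c _.
by congr (_ * negbin _ _); ring.
Qed.

Lemma hvec_ext d (b c : nat -> int) i :
  (forall n, b n = c n) -> hvec d b i = hvec d c i.
Proof. by move=> bc; apply: eq_bigr => j _; rewrite bc. Qed.

Lemma hvec_lead d (b : nat -> int) n :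
  hvec d b n = b n + \sum_(j < d.+1 | (j <= n)%N && (j != ord0))
                       (-1) ^+ j * ('C(d, j))%:Z * b (n - j)%N.
Proof. by rewrite /hvec (bigD1 ord0) //= subn0 expr0 bin0 !mul1r. Qed.

Lemma hvec0 d (b : nat -> int) : hvec d b 0 = b 0%N.
Proof.
rewrite hvec_lead big1 ?addr0 // => j /andP[j0 /eqP jn0].
by case: jn0; apply: val_inj; move: j0; rewrite leqn0 => /eqP.
Qed.

Lemma hvecB d (b c : nat -> int) i :
  hvec d (fun n => b n - c n) i = hvec d b i - hvec d c i.
Proof. rewrite /hvec -sumrB; apply: eq_bigr => j _; ring. Qed.

Lemma hvec_eq0 d (b : nat -> int) : (forall n, hvec d b n = 0) -> forall n, b n = 0.
Proof.
move=> hb; elim/ltn_ind => n IH.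
have := hb n; rewrite hvec_lead big1 ?addr0 // => j /andP[jn /eqP j0].
rewrite IH ?mulr0 //.
have : (nat_of_ord j != 0)%N by apply/eqP => e; apply: j0; apply: val_inj.
lia.
Qed.

Lemma hvec_inj d (b c : nat -> int) :
  (forall n, hvec d b n = hvec d c n) -> forall n, b n = c n.
Proof.
move=> bc n; apply/eqP; rewrite -subr_eq0; apply/eqP; move: n.
apply: (hvec_eq0 (d := d) (b := fun n => b n - c n)) => n.
by rewrite hvecB bc subrr.
Qed.

Lemma hvec_veronese d (h : nat -> int) L (b : nat -> int) r i : (0 < r)%N ->
  (forall n, b n = \sum_(k < L) h k * negbin d (n%:Z - k%:Z)) ->
  hvec d (veronese r b) i = \sum_(k < L) h k * rnom d r ((i * r)%N%:Z - k%:Z).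
Proof.
move=> r0 hb; rewrite /hvec big_mkcond /=.
transitivity (\sum_(j < d.+1) (-1) ^+ j * ('C(d, j))%:Z *
    \sum_(k < L) h k * negbin d ((i * r)%N%:Z - k%:Z - (j * r)%N%:Z)).
  apply: eq_bigr => j _; case: ifP => hj.
    rewrite /veronese hb; congr (_ * _); apply: eq_bigr => k _; congr (_ * negbin _ _).
    nia.
  rewrite big1 ?mulr0 // => k _; rewrite negbin_neg ?mulr0 //.
  have hj' : (i < j)%N by rewrite ltnNge hj.
  nia.
rewrite (eq_bigr _ (fun j _ => mulr_sumr _ _ _ _)).
rewrite exchange_big /=; apply: eq_bigr => k _.
rewrite -negbin_rnom mulr_sumr; apply: eq_bigr => j _; ring.
Qed.

Lemma veronese1 (b : nat -> int) n : veronese 1 b n = b n.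
Proof. by rewrite /veronese muln1. Qed.

Section RationalSeries.

Variables (d lam : nat) (a : nat -> int).
Hypothesis hrat : forall i : nat, (lam < i)%N -> hvec d a i = 0.

Lemma series_of_hvec n :
  a n = \sum_(k < lam.+1) hvec d a k * negbin d (n%:Z - k%:Z).
Proof.
set a' := fun n => \sum_(k < lam.+1) hvec d a k * negbin d (n%:Z - k%:Z).
apply: (hvec_inj (d := d) (c := a')) => {}n.
rewrite -(@hvec_ext d _ _ n (veronese1 a')) (@hvec_veronese d (hvec d a) lam.+1 a' 1 n) // muln1.
under eq_bigr => k _ do rewrite rnom1 subr_eq0 eqz_nat.
case: (ltnP n lam.+1) => hn.
  rewrite (bigD1 (Ordinal hn)) //= eqxx mulr1 big1 ?addr0 // => k /eqP hk.
  case: eqP => [e|]; last by rewrite mulr0.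
  by case: hk; apply: val_inj; rewrite /= e.
rewrite hrat // big1 // => k _; case: eqP => [e|]; last by rewrite mulr0.
by have := ltn_ord k; rewrite -e ltnNge hn.
Qed.

(* rnom d r ((i+1) r - k) - rnom d r (i r - k) is the contribution of h_k
   to g_(i+1)(a^<r>). *)
Definition gdiff (r i k : nat) : int :=
  rnom d r ((i.+1 * r)%N%:Z - k%:Z) - rnom d r ((i * r)%N%:Z - k%:Z).

Lemma gvec_veronese r i : (0 < r)%N ->
  gvec d (veronese r a) i.+1 = \sum_(k < lam.+1) hvec d a k * gdiff r i k.
Proof.
move=> r0; rewrite /gvec.
have hv j := hvec_veronese (h := hvec d a) (L := lam.+1) j r0 series_of_hvec.
rewrite !hv.
by rewrite -sumrB; apply: eq_bigr => k _; rewrite /gdiff mulrBr.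
Qed.

Hypothesis hnn : forall i : nat, (i <= lam)%N -> 0 <= hvec d a i.

Lemma gvec_veronese_le r s i : (0 < r)%N -> (0 < s)%N ->
  (forall k, gdiff r i k <= gdiff s i k) ->
  gvec d (veronese r a) i.+1 <= gvec d (veronese s a) i.+1.
Proof.
move=> r0 s0 hrs; rewrite !gvec_veronese //; apply: ler_sum => k _.
by apply: ler_wpM2l => //; apply: hnn; rewrite -ltnS.
Qed.

End RationalSeries.

Lemma gvec_veronese1 d (b : nat -> int) i : gvec d (veronese 1 b) i = gvec d b i.
Proof.
have hv j : hvec d (veronese 1 b) j = hvec d b j by apply: hvec_ext; exact: veronese1.
by case: i => [|i]; rewrite /gvec !hv.
Qed.

(* Passing from a = a^<1> to a^<d>: with E_d^1(m) = [m = 0], the left side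
   is [k = i+1] - [k = i], while the right side is nonnegative left of the
   centre and at least 1 for k = i+1 since rnom d d then strictly increases. *)
Lemma gdiff_one_le d i k : (2 * i.+1 <= d)%N -> gdiff d 1 i k <= gdiff d d i k.
Proof.
move=> hd.
have [n en] : exists n, d = n.+2 by exists d.-2; lia.
have d0 : (0 < d)%N by lia.
have hdd : (2 * (i.+1 * d) <= d * d)%N by rewrite mulnA leq_mul2r hd orbT.
have eC : rdeg d d = (d * d)%N%:Z - d%:Z by rewrite /rdeg en /=; nia.
rewrite /gdiff !rnom1 !muln1 !subr_eq0 !eqz_nat.
set m := (i.+1 * d)%N%:Z - k%:Z.
have -> : (i * d)%N%:Z - k%:Z = m - d%:Z by rewrite /m mulSn PoszD; ring.
have win_ge0 : 0 <= rnom d d m - rnom d d (m - d%:Z).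
  by rewrite subr_ge0; apply: rnom_mono => //; rewrite ?eC /m; lia.
case: eqP => [hk|hk]; last by apply: le_trans win_ge0; case: eqP => _; lia.
have -> : (i == k) = false by apply/eqP; lia.
have step_pos : 1 <= rnom d d m - rnom d d (m - 1).
  have := @rnom_diff_pos n d m d0; rewrite -en; apply; rewrite ?eC /m -hk; nia.
have rest_ge0 : 0 <= rnom d d (m - 1) - rnom d d (m - d%:Z).
  by rewrite subr_ge0; apply: rnom_mono => //; rewrite ?eC /m; lia.
lra.
Qed.

(* Passing from a^<r> to a^<r+1> for r >= d: the window comparison with
   shift i+1, at a position left of the centre since d <= r. *)
Lemma gdiff_succ_le d r i k : (2 * i.+1 <= d)%N -> (d <= r)%N ->
  gdiff d r i k <= gdiff d r.+1 i k.
Proof.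
move=> hd hr; have r0 : (0 < r)%N by lia.
have h1 : (2 * i.+1 * r.+1 <= d * r.+1)%N by rewrite leq_mul2r hd orbT.
have h2 : (d * r.+1 <= d.+1 * r)%N by rewrite mulnS mulSn leq_add2r.
set m := (i.+1 * r)%N%:Z - k%:Z.
have hm : 2 * (m + i.+1%:Z) <= rdeg d.+1 r.+1 by rewrite /rdeg /m /=; nia.
have := @window_cmp_all d r r0 i.+1 m hd hm.
have -> : m - r%:Z = (i * r)%N%:Z - k%:Z by rewrite /m mulSn PoszD; ring.
have -> : m + i.+1%:Z = (i.+1 * r.+1)%N%:Z - k%:Z by rewrite /m mulnS PoszD; ring.
have -> : (i.+1 * r.+1)%N%:Z - k%:Z - r.+1%:Z = (i * r.+1)%N%:Z - k%:Z.
  by rewrite !mulnS !mulSn !PoszD; ring.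
by [].
Qed.

Unset Implicit Arguments.

Theorem mainTheorem11 (d : nat) (a : nat -> int) (lam : nat)
  (hd : (1 <= d)%N)
  (hrat : forall i : nat, (lam < i)%N -> hvec d a i = 0)
  (hlam : hvec d a lam != 0)
  (hnn : forall i : nat, (i <= lam)%N -> 0 <= hvec d a i) :
  forall i : nat, (i <= d./2)%N ->
    gvec d a i <= gvec d (veronese d a) i /\
    (forall r : nat, (d <= r)%N ->
       gvec d (veronese r a) i <= gvec d (veronese r.+1 a) i).
Proof.
(* g_0 = h_0 = a_0 for every Veronese series *)
move=> [|i] hi; first by rewrite /gvec !hvec0; split.
have hi2 : (2 * i.+1 <= d)%N by move: hi; rewrite -leq_double -muln2; lia.
split.
  rewrite -gvec_veronese1.
  by apply: (gvec_veronese_le hrat hnn (r := 1) (s := d)) => // k; exact: gdiff_one_le.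
move=> r hr; apply: (gvec_veronese_le hrat hnn (r := r) (s := r.+1)) => [|//|k].
  lia.
exact: gdiff_succ_le.
Qed.
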